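(* Consider binary floating-point arithmetic with precision $p \ge 2$ and unit round-off $u = 2^{-p}$, where every operation (including square root) is correctly rounded to nearest, $\mathrm{RN}$. Let $x,y$ be floating-point numbers and consider the algorithm $s_x \gets \mathrm{RN}(x^2)$, $s_y \gets \mathrm{RN}(y^2)$, $\sigma \gets \mathrm{RN}(s_x+s_y)$, $\rho \gets \mathrm{RN}(\sqrt{\sigma})$. Barring underflow and overflow, for $u \le 1/4$ the relative error $R = \rho/\sqrt{x^2+y^2} - 1$ satisfies \[ |R| \le \frac{1+3u-\sqrt{1+2u}}{1+u} = 2u + \kappa u^2, \quad\text{with } \kappa < -\tfrac54. \]
   Context: A radix-2 floating-point number of precision $p$ has the form $M\cdot 2^{e-p+1}$ with integers $|M|\le 2^p-1$ and $e_{\min}\le e\le e_{\max}$. $\mathrm{RN}$ denotes rounding to nearest (ties-to-even) into this set. ''Barring underflow and overflow'' means all intermediate results lie in the normal range $2^{e_{\min}}\le |t|\le (2^p-1)2^{e_{\max}-p+1}$ (or are zero). The unit round-off is $u=2^{-p}$. *)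

From Stdlib Require Import Reals ZArith Lra Lia.
Open Scope R_scope.

Definition is_float (p emin emax : Z) (x : R) : Prop :=
  exists M e : Z,
    x = IZR M * powerRZ 2 (e - p + 1) /\
    (Z.abs M <= 2 ^ p - 1)%Z /\ (emin <= e <= emax)%Z.

(* x has an even integral significand in its canonical representation
   (normalized, i.e. 2^(p-1) <= |M|, or with minimal exponent e = emin). *)
Definition is_even_float (p emin emax : Z) (x : R) : Prop :=
  exists M e : Z,
    x = IZR M * powerRZ 2 (e - p + 1) /\
    (Z.abs M <= 2 ^ p - 1)%Z /\ (emin <= e <= emax)%Z /\
    (e = emin \/ (2 ^ (p - 1) <= Z.abs M)%Z) /\
    Z.Even M.

(* r = RN(t): round to nearest, ties to even. *)
Definition is_RN (p emin emax : Z) (t r : R) : Prop :=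
  is_float p emin emax r /\
  (forall f, is_float p emin emax f -> Rabs (r - t) <= Rabs (f - t)) /\
  (forall f, is_float p emin emax f -> f <> r ->
     Rabs (f - t) = Rabs (r - t) -> is_even_float p emin emax r).

(* t is zero or lies in the normal range (no underflow, no overflow). *)
Definition in_range (p emin emax : Z) (t : R) : Prop :=
  t = 0 \/
  (powerRZ 2 emin <= Rabs t <= IZR (2 ^ p - 1) * powerRZ 2 (emax - p + 1)).

Definition unit_roundoff (p : Z) : R := powerRZ 2 (- p).

From Stdlib Require Import Reals ZArith Lra Lia Psatz.
Open Scope R_scope.

(** Rounding a nonnegative t in the normal range to nearest has relative error
    at most eps = u/(1+u), so sigma is within a factor (1 ± eps)^2 of
    x^2 + y^2 and sqrt sigma within (1 ± eps) of sqrt (x^2 + y^2).  The final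
    rounding does better: if 2^e <= t < 2^(e+1), the float t^2 = sigma is a
    multiple of 2u·4^e, so either t^2 <= (1+2u)·4^e and rounding down to 2^e
    costs at most d·t with d = 1 - 1/sqrt(1+2u), or t^2 >= (1+4u)·4^e and the
    half-ulp bound u·2^e is at most d·t as well.  Composing the relative errors
    gives d + eps + d·eps = (1 + 3u - sqrt(1+2u))/(1+u). *)

Local Notation pow2 z := (powerRZ 2 z).

Lemma pow2_pos z : 0 < pow2 z.
Proof. apply powerRZ_lt; lra. Qed.

Lemma pow2_add m n : pow2 (m + n) = pow2 m * pow2 n.
Proof. apply powerRZ_add; lra. Qed.

Lemma pow2_lt m n : (m < n)%Z -> pow2 m < pow2 n.
Proof.
  intro mn. rewrite !powerRZ_Rpower by lra.
  apply Rpower_lt; [lra | now apply IZR_lt].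
Qed.

Lemma pow2_le m n : (m <= n)%Z -> pow2 m <= pow2 n.
Proof.
  intro mn. destruct (Z.eq_dec m n) as [-> |]; [lra |].
  apply Rlt_le, pow2_lt; lia.
Qed.

Lemma pow2_lt_inv m n : pow2 m < pow2 n -> (m < n)%Z.
Proof.
  intro lt_mn. destruct (Z_lt_le_dec m n) as [| nm]; [easy |].
  apply pow2_le in nm. lra.
Qed.

Lemma IZR_Zpow2 k : (0 <= k)%Z -> IZR (2 ^ k) = pow2 k.
Proof.
  intro k_ge0. rewrite <- (Z2Nat.id k k_ge0), <- pow_IZR, pow_powerRZ. reflexivity.
Qed.

Lemma pow2_binade t : 0 < t -> exists e, pow2 e <= t < pow2 (e + 1).
Proof.
  intro t_pos. set (l := ln t / ln 2).
  assert (ln2_pos : 0 < ln 2) by (rewrite <- ln_1; apply ln_increasing; lra).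
  assert (ln_t : ln t = l * ln 2) by (unfold l; field; lra).
  exists (Int_part l). destruct (base_Int_part l) as [fl_le fl_gt].
  rewrite !powerRZ_Rpower, <- (exp_ln t), plus_IZR by lra. unfold Rpower.
  rewrite ln_t. split.
  - destruct fl_le as [fl_lt | fl_eq]; [apply Rlt_le, exp_increasing; nra |].
    rewrite fl_eq. lra.
  - apply exp_increasing. nra.
Qed.

Lemma unit_roundoff_pos p : 0 < unit_roundoff p.
Proof. apply pow2_pos. Qed.

Lemma pow2_ulp p e : pow2 (e - p + 1) = 2 * unit_roundoff p * pow2 e.
Proof.
  unfold unit_roundoff. replace (e - p + 1)%Z with (1 + - p + e)%Z by lia.
  rewrite !pow2_add. simpl. ring.
Qed.

Lemma Rabs_le_between x y : Rabs x <= y -> - y <= x <= y.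
Proof. unfold Rabs. destruct (Rcase_abs x); lra. Qed.

Lemma div_one_plus_range u : 0 <= u -> 0 <= u / (1 + u) < 1.
Proof.
  intro u_ge. assert (u / (1 + u) * (1 + u) = u) by (field; lra). nra.
Qed.

Lemma sum_sqr_pos x y : x <> 0 \/ y <> 0 -> 0 < x * x + y * y.
Proof.
  intros [x_nz | y_nz]; pose proof (Rle_0_sqr x); pose proof (Rle_0_sqr y);
    [pose proof (Rsqr_pos_lt x x_nz) | pose proof (Rsqr_pos_lt y y_nz)];
    unfold Rsqr in *; lra.
Qed.

Lemma rel_error_add a a' b b' e :
  Rabs (a' - a) <= e * a -> Rabs (b' - b) <= e * b ->
  Rabs (a' + b' - (a + b)) <= e * (a + b).
Proof.
  intros. replace (a' + b' - (a + b)) with ((a' - a) + (b' - b)) by ring.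
  eapply Rle_trans; [apply Rabs_triang | lra].
Qed.

Lemma sqrt_rel_error_twice e S T v : 0 <= e <= 1 -> 0 <= S ->
  Rabs (T - S) <= e * S -> Rabs (v - T) <= e * T ->
  Rabs (sqrt v - sqrt S) <= e * sqrt S.
Proof.
  intros e_range S_ge TS vT.
  apply Rabs_le_between in TS, vT. apply Rabs_le.
  assert (sqrt_lo : (1 - e) * sqrt S <= sqrt v).
  { rewrite <- (sqrt_square (1 - e)), <- sqrt_mult_alt by nra.
    apply sqrt_le_1_alt. nra. }
  assert (sqrt_hi : sqrt v <= (1 + e) * sqrt S).
  { rewrite <- (sqrt_square (1 + e)), <- sqrt_mult_alt by nra.
    apply sqrt_le_1_alt. nra. }
  lra.
Qed.

Lemma rel_error_compose d e s t r : 0 <= d -> 0 < s ->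
  Rabs (t - s) <= e * s -> Rabs (r - t) <= d * t ->
  Rabs (r / s - 1) <= d + e + d * e.
Proof.
  intros d_ge s_pos ts rt.
  assert (t_le : t <= (1 + e) * s) by (apply Rabs_le_between in ts; lra).
  replace (r / s - 1) with ((r - t + (t - s)) / s) by (field; lra).
  unfold Rdiv. rewrite Rabs_mult, Rabs_inv, (Rabs_pos_eq s) by lra.
  apply Rmult_le_reg_r with s; [lra |].
  rewrite Rmult_assoc, Rinv_l by lra.
  pose proof (Rabs_triang (r - t) (t - s)). nra.
Qed.

Lemma rel_error_bound_eq u : 0 <= u ->
  (1 - 1 / sqrt (1 + 2 * u)) + u / (1 + u) + (1 - 1 / sqrt (1 + 2 * u)) * (u / (1 + u))
  = (1 + 3 * u - sqrt (1 + 2 * u)) / (1 + u).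
Proof.
  intro u_ge. set (a := sqrt (1 + 2 * u)).
  assert (a_sqr : a * a = 1 + 2 * u) by (apply sqrt_sqrt; lra).
  assert (a_pos : 0 < a) by (apply sqrt_lt_R0; lra).
  clearbody a. replace u with ((a * a - 1) / 2) by lra.
  field. split; lra.
Qed.

Lemma sqrt_error_bound_nonneg u : 0 <= u -> 0 <= 1 - 1 / sqrt (1 + 2 * u).
Proof.
  intro u_ge.
  assert (1 <= sqrt (1 + 2 * u)) by (rewrite <- sqrt_1 at 1; apply sqrt_le_1_alt; lra).
  enough (1 / sqrt (1 + 2 * u) <= 1) by lra.
  apply Rmult_le_reg_r with (sqrt (1 + 2 * u)); [lra |]. field_simplify; lra.
Qed.

Lemma half_ulp_le_sqrt_error_bound u : 0 < u <= 1 / 4 ->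
  u <= (1 - 1 / sqrt (1 + 2 * u)) * sqrt (1 + 4 * u).
Proof.
  intro u_range.
  set (a := sqrt (1 + 2 * u)). set (b := sqrt (1 + 4 * u)).
  assert (a_sqr : a * a = 1 + 2 * u) by (apply sqrt_sqrt; lra).
  assert (b_sqr : b * b = 1 + 4 * u) by (apply sqrt_sqrt; lra).
  assert (a_ge : 0 <= a) by apply sqrt_pos. assert (b_ge : 0 <= b) by apply sqrt_pos.
  assert (a_ge1 : 1 <= a) by (apply Rsqr_incr_0_var; unfold Rsqr; nra).
  assert (a_le : a <= 1 + u) by (apply Rsqr_incr_0_var; unfold Rsqr; nra).
  assert (b_ge2 : 1 + 2 * u - 2 * u * u <= b)
    by (apply Rsqr_incr_0_var; unfold Rsqr; nra).
  (* (a - 1) b = 2u b / (a + 1), and a (a + 1) <= 2b *)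
  assert (key : u * a <= (a - 1) * b).
  { apply Rmult_le_reg_r with (a + 1); [lra |].
    replace ((a - 1) * b * (a + 1)) with ((a * a - 1) * b) by ring. nra. }
  apply Rmult_le_reg_r with a; [lra |].
  field_simplify; lra.
Qed.

Lemma rel_error_bound_second_order u : 0 < u <= 1 / 4 ->
  ((1 + 3 * u - sqrt (1 + 2 * u)) / (1 + u) - 2 * u) / (u * u) < - 5 / 4.
Proof.
  intro u_range.
  set (a := sqrt (1 + 2 * u)).
  assert (a_sqr : a * a = 1 + 2 * u) by (apply sqrt_sqrt; lra).
  assert (a_ge : 0 <= a) by apply sqrt_pos.
  (* the claim multiplied by u^2 (1 + u) is this lower bound on sqrt (1 + 2u) *)
  assert (a_gt : 1 + u - 3 / 4 * u * u + 5 / 4 * u * u * u < a).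
  { set (c := 1 + u - 3 / 4 * u * u + 5 / 4 * u * u * u).
    assert (c_ge : 0 <= c) by (unfold c; nra).
    apply Rnot_le_lt. intro a_le.
    assert (a * a <= c * c) by nra.
    assert (u * u * u <= u * u / 4) by nra.
    assert (u * u * u * u <= u * u / 16) by nra.
    unfold c in *. nra. }
  apply Rmult_lt_reg_r with (u * u); [nra |].
  unfold Rdiv. field_simplify; [| nra].
  apply (Rmult_lt_reg_r (u + 1)); [lra |].
  unfold Rdiv. rewrite Rmult_assoc, Rinv_l by lra. nra.
Qed.

Section Binary_format.

Variables p emin emax : Z.
Hypothesis p_ge2 : (2 <= p)%Z.

Local Notation u := (unit_roundoff p).
Local Notation float := (is_float p emin emax).
Let fmax := IZR (2 ^ p - 1) * pow2 (emax - p + 1).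

Definition is_nearest (t r : R) : Prop :=
  forall f, is_float p emin emax f -> Rabs (r - t) <= Rabs (f - t).

Lemma Zpow2_prec : (1 <= 2 ^ (p - 1) /\ 2 ^ p = 2 * 2 ^ (p - 1))%Z.
Proof.
  split.
  - assert (0 < 2 ^ (p - 1))%Z by (apply Z.pow_pos_nonneg; lia). lia.
  - replace p with (Z.succ (p - 1)) at 1 by lia. rewrite Z.pow_succ_r; lia.
Qed.

Lemma is_float_pow2 e : (emin <= e <= emax)%Z -> float (pow2 e).
Proof.
  intro He. destruct Zpow2_prec.
  exists (2 ^ (p - 1))%Z, e. split; [| lia].
  rewrite IZR_Zpow2, <- pow2_add by lia. f_equal. lia.
Qed.

Lemma fmax_lt_pow2 : fmax < pow2 (emax + 1).
Proof.
  unfold fmax. rewrite minus_IZR, IZR_Zpow2 by lia.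
  replace (emax + 1)%Z with (p + (emax - p + 1))%Z by lia. rewrite (pow2_add p).
  pose proof (pow2_pos (emax - p + 1)). nra.
Qed.

Lemma binade_in_range t : pow2 emin <= t <= fmax ->
  exists e, (emin <= e <= emax)%Z /\ pow2 e <= t < pow2 (e + 1).
Proof.
  intros t_range. pose proof (pow2_pos emin). pose proof fmax_lt_pow2.
  destruct (pow2_binade t) as [e [e_le e_gt]]; [lra |].
  exists e. split; [| lra].
  assert (emin < e + 1)%Z by (apply pow2_lt_inv; lra).
  assert (e < emax + 1)%Z by (apply pow2_lt_inv; lra).
  lia.
Qed.

Lemma float_near_in_binade t e : (emin <= e <= emax)%Z ->
  pow2 e <= t < pow2 (e + 1) -> t <= fmax ->
  exists f, float f /\ Rabs (f - t) <= u * pow2 e.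
Proof.
  intros He [t_ge t_lt] t_le. destruct Zpow2_prec as [prec_ge prec_succ].
  set (ulp := pow2 (e - p + 1)).
  assert (ulp_pos : 0 < ulp) by apply pow2_pos.
  assert (pow2_e : pow2 e = pow2 (p - 1) * ulp)
    by (unfold ulp; rewrite <- pow2_add; f_equal; lia).
  assert (pow2_e1 : pow2 (e + 1) = pow2 p * ulp)
    by (unfold ulp; rewrite <- pow2_add; f_equal; lia).
  set (q := t / ulp).
  assert (t_eq : t = q * ulp) by (unfold q; field; lra).
  assert (q_lo : IZR (2 ^ (p - 1)) <= q) by (rewrite IZR_Zpow2 by lia; nra).
  assert (q_hi : q < IZR (2 ^ p)) by (rewrite IZR_Zpow2 by lia; nra).
  set (n := Int_part (q + / 2)).
  destruct (base_Int_part (q + / 2)) as [n_le n_gt]. fold n in n_le, n_gt.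
  assert (n_near : Rabs (IZR n * ulp - t) <= u * pow2 e).
  { rewrite t_eq, <- Rmult_minus_distr_r.
    rewrite Rabs_mult, (Rabs_pos_eq ulp) by lra.
    replace (u * pow2 e) with (/ 2 * ulp) by (unfold ulp; rewrite pow2_ulp; lra).
    apply Rmult_le_compat_r; [lra |]. apply Rabs_le. lra. }
  assert (n_lo : (2 ^ (p - 1) - 1 < n)%Z) by (apply lt_IZR; rewrite minus_IZR; lra).
  assert (n_hi : (n < 2 ^ p + 1)%Z) by (apply lt_IZR; rewrite plus_IZR; lra).
  destruct (Z.eq_dec n (2 ^ p)) as [n_top | n_lt].
  - exists (pow2 (e + 1)). split.
    + apply is_float_pow2. split; [lia |].
      destruct (Z.eq_dec e emax) as [-> | ]; [exfalso | lia].
      assert (q <= IZR (2 ^ p - 1)) by (unfold fmax in t_le; fold ulp in t_le; nra).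
      rewrite n_top in n_le. rewrite minus_IZR in *. lra.
    + replace (pow2 (e + 1)) with (IZR n * ulp); [exact n_near |].
      rewrite n_top, IZR_Zpow2 by lia. lra.
  - exists (IZR n * ulp). split; [| exact n_near].
    exists n, e. split; [reflexivity | lia].
Qed.

Lemma nearest_error_binade t r e : is_nearest t r -> (emin <= e <= emax)%Z ->
  pow2 e <= t < pow2 (e + 1) -> t <= fmax ->
  Rabs (r - t) <= t - pow2 e /\ Rabs (r - t) <= u * pow2 e.
Proof.
  intros near He t_binade t_le. split.
  - rewrite <- (Rabs_pos_eq (t - pow2 e)), (Rabs_minus_sym t) by lra.
    apply near, is_float_pow2, He.
  - destruct (float_near_in_binade t e He t_binade t_le) as [f [Ff f_near]].
    eapply Rle_trans; [apply near, Ff | exact f_near].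
Qed.

Lemma nearest_rel_error t r : pow2 emin <= t <= fmax -> is_nearest t r ->
  Rabs (r - t) <= u / (1 + u) * t.
Proof.
  intros t_range near.
  destruct (binade_in_range t t_range) as [e [He t_binade]].
  destruct (nearest_error_binade t r e near He t_binade (proj2 t_range))
    as [below half_ulp].
  pose proof (unit_roundoff_pos p). pose proof (pow2_pos e).
  apply Rmult_le_reg_r with (1 + u); [lra |].
  replace (u / (1 + u) * t * (1 + u)) with (u * t) by (field; lra).
  (* rounding down to 2^e suffices up to (1 + u) 2^e, the half-ulp bound beyond *)
  destruct (Rle_lt_dec t ((1 + u) * pow2 e)); nra.
Qed.

Lemma float_ge_pow2_multiple_ulp z e : float z -> pow2 e <= z ->
  exists N : Z, z = IZR N * pow2 (e - p + 1).
Proof.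
  intros [M [k [-> [M_le _]]]] z_ge.
  assert (e_le_k : (e <= k)%Z).
  { destruct (Z_lt_le_dec k e) as [k_lt |]; [exfalso | easy].
    assert (IZR M <= pow2 p - 1).
    { rewrite <- IZR_Zpow2, <- minus_IZR by lia. apply IZR_le. lia. }
    assert (pow2 (k + 1) <= pow2 e) by (apply pow2_le; lia).
    assert (pow2 (k + 1) = pow2 p * pow2 (k - p + 1))
      by (rewrite <- pow2_add; f_equal; lia).
    pose proof (pow2_pos (k - p + 1)). nra. }
  exists (M * 2 ^ (k - e))%Z.
  rewrite mult_IZR, IZR_Zpow2, Rmult_assoc, <- pow2_add by lia. do 2 f_equal. lia.
Qed.

Lemma float_gap_above_pow2 z e : float z -> pow2 e <= z ->
  z <= (1 + 2 * u) * pow2 e \/ (1 + 4 * u) * pow2 e <= z.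
Proof.
  intros Fz z_ge. destruct Zpow2_prec.
  destruct (float_ge_pow2_multiple_ulp z e Fz z_ge) as [N ->].
  assert (ulp_pos : 0 < pow2 (e - p + 1)) by apply pow2_pos.
  assert (pow2_e : pow2 e = IZR (2 ^ (p - 1)) * pow2 (e - p + 1))
    by (rewrite IZR_Zpow2, <- pow2_add by lia; f_equal; lia).
  assert (ulp_eq := pow2_ulp p e).
  destruct (Z_le_gt_dec N (2 ^ (p - 1) + 1)) as [N_le | N_gt].
  - left. apply IZR_le in N_le. rewrite plus_IZR in N_le. nra.
  - right. assert (IZR (2 ^ (p - 1) + 2) <= IZR N) by (apply IZR_le; lia).
    rewrite plus_IZR in *. nra.
Qed.

Lemma nearest_sqrt_float_rel_error t r : u <= 1 / 4 -> pow2 emin <= t <= fmax ->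
  float (t * t) -> is_nearest t r ->
  Rabs (r - t) <= (1 - 1 / sqrt (1 + 2 * u)) * t.
Proof.
  intros u_le t_range Ftt near.
  destruct (binade_in_range t t_range) as [e [He t_binade]].
  destruct (nearest_error_binade t r e near He t_binade (proj2 t_range))
    as [below half_ulp].
  pose proof (unit_roundoff_pos p). pose proof (pow2_pos e).
  set (a := sqrt (1 + 2 * u)). set (b := sqrt (1 + 4 * u)).
  assert (a_sqr : a * a = 1 + 2 * u) by (apply sqrt_sqrt; lra).
  assert (b_sqr : b * b = 1 + 4 * u) by (apply sqrt_sqrt; lra).
  assert (a_ge : 0 <= a) by apply sqrt_pos. assert (b_ge : 0 <= b) by apply sqrt_pos.
  assert (a_ge1 : 1 <= a) by (apply Rsqr_incr_0_var; unfold Rsqr; nra).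
  assert (tt_lo : pow2 (e + e) <= t * t) by (rewrite pow2_add; nra).
  destruct (float_gap_above_pow2 (t * t) (e + e) Ftt tt_lo) as [tt_le | tt_ge];
    rewrite pow2_add in *.
  - assert (t_le : t <= a * pow2 e) by (apply Rsqr_incr_0_var; unfold Rsqr; nra).
    eapply Rle_trans; [exact below |].
    replace ((1 - 1 / a) * t) with (t - t / a) by (field; lra).
    enough (t / a <= pow2 e) by lra.
    apply Rmult_le_reg_r with a; [lra |]. field_simplify; nra.
  - assert (t_ge : b * pow2 e <= t) by (apply Rsqr_incr_0_var; unfold Rsqr; nra).
    pose proof (half_ulp_le_sqrt_error_bound u (conj (unit_roundoff_pos p) u_le))
      as u_le_db.
    pose proof (sqrt_error_bound_nonneg u ltac:(lra)) as d_ge.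
    fold a b in u_le_db, d_ge. eapply Rle_trans; [exact half_ulp |]. nra.
Qed.

Lemma RN_rel_error t r : (emin <= emax)%Z -> 0 <= t ->
  in_range p emin emax t -> is_RN p emin emax t r ->
  Rabs (r - t) <= u / (1 + u) * t.
Proof.
  intros emin_le t_ge [t0 | t_range] [_ [near _]].
  - subst t. rewrite Rmult_0_r.
    assert (F0 : float 0) by (exists 0%Z, emin; split; [simpl; ring | lia]).
    specialize (near 0 F0). rewrite Rminus_diag, Rabs_R0 in near. exact near.
  - rewrite Rabs_pos_eq in t_range by lra. apply nearest_rel_error; assumption.
Qed.

Lemma sqrt_RN_sum_sqr_rel_error x y sx sy sigma : (emin <= emax)%Z ->
  in_range p emin emax (x * x) -> in_range p emin emax (y * y) ->
  in_range p emin emax (sx + sy) ->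
  is_RN p emin emax (x * x) sx -> is_RN p emin emax (y * y) sy ->
  is_RN p emin emax (sx + sy) sigma ->
  Rabs (sqrt sigma - sqrt (x * x + y * y)) <= u / (1 + u) * sqrt (x * x + y * y).
Proof.
  intros emin_le Rxx Ryy Rs RNx RNy RNs.
  pose proof (div_one_plus_range u (Rlt_le _ _ (unit_roundoff_pos p))) as eps_range.
  set (eps := u / (1 + u)) in *.
  assert (Ex := RN_rel_error (x * x) sx emin_le (Rle_0_sqr x) Rxx RNx).
  assert (Ey := RN_rel_error (y * y) sy emin_le (Rle_0_sqr y) Ryy RNy).
  fold eps in Ex, Ey.
  assert (sum_ge : 0 <= sx + sy).
  { pose proof (Rabs_le_between _ _ Ex). pose proof (Rabs_le_between _ _ Ey).
    assert (0 <= (1 - eps) * (x * x + y * y)) by (apply Rmult_le_pos; nra). lra. }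
  assert (Es := RN_rel_error (sx + sy) sigma emin_le sum_ge Rs RNs).
  apply (sqrt_rel_error_twice eps _ (sx + sy)); [lra | nra | | exact Es].
  exact (rel_error_add _ _ _ _ _ Ex Ey).
Qed.

End Binary_format.

Theorem theorem1 (p emin emax : Z) (x y sx sy sigma rho : R) :
  (2 <= p)%Z ->
  unit_roundoff p <= 1 / 4 ->
  is_float p emin emax x ->
  is_float p emin emax y ->
  (x <> 0 \/ y <> 0) ->
  (* barring underflow and overflow: every exact intermediate result *)
  in_range p emin emax (x * x) ->
  in_range p emin emax (y * y) ->
  in_range p emin emax (sx + sy) ->
  in_range p emin emax (sqrt sigma) ->
  is_RN p emin emax (x * x) sx ->
  is_RN p emin emax (y * y) sy ->
  is_RN p emin emax (sx + sy) sigma ->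
  is_RN p emin emax (sqrt sigma) rho ->
  let u := unit_roundoff p in
  let B := (1 + 3 * u - sqrt (1 + 2 * u)) / (1 + u) in
  Rabs (rho / sqrt (x * x + y * y) - 1) <= B /\
  (B - 2 * u) / (u * u) < - 5 / 4.
Proof.
  intros p_ge2 u_le Fx _ xy_nz Rxx Ryy Rs Rt RNx RNy RNs RNt u B.
  fold u in u_le. assert (u_pos : 0 < u) by apply unit_roundoff_pos.
  split; [| apply rel_error_bound_second_order; lra].
  assert (emin_le : (emin <= emax)%Z) by (destruct Fx as (? & ? & _ & _ & ?); lia).
  pose proof (sqrt_lt_R0 _ (sum_sqr_pos x y xy_nz)) as s_pos.
  assert (Et := sqrt_RN_sum_sqr_rel_error p emin emax p_ge2 x y sx sy sigma
                  emin_le Rxx Ryy Rs RNx RNy RNs).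
  fold u in Et.
  assert (t_pos : 0 < sqrt sigma).
  { pose proof (Rabs_le_between _ _ Et).
    pose proof (div_one_plus_range u ltac:(lra)). nra. }
  assert (t_range : pow2 emin <= sqrt sigma <= IZR (2 ^ p - 1) * pow2 (emax - p + 1)).
  { destruct Rt as [t0 | t_range]; [lra |]. now rewrite Rabs_pos_eq in t_range by lra. }
  assert (Ftt : is_float p emin emax (sqrt sigma * sqrt sigma)).
  { rewrite sqrt_sqrt; [exact (proj1 RNs) |].
    apply Rlt_le, sqrt_lt_0_alt. now rewrite sqrt_0. }
  assert (Erho := nearest_sqrt_float_rel_error p emin emax p_ge2 _ rho u_le t_range Ftt
                   (proj1 (proj2 RNt))).
  unfold B. rewrite <- rel_error_bound_eq by lra.
  apply (rel_error_compose _ _ _ (sqrt sigma)); try assumption.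
  apply sqrt_error_bound_nonneg; lra.
Qed.
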